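(* Let $G_1$ and $G_2$ be two vertex-disjoint finite connected simple graphs, each having at least one edge. Then $\mathcal{NC}(G_1\sqcup G_2)\simeq\Sigma\big(\mathcal{NC}(G_1)\ast\mathcal{NC}(G_2)\big)$ (homotopy equivalence of geometric realizations), where $\Sigma$ denotes suspension.
   Context: For a finite simple graph $G$, a set $S\subseteq V(G)$ is a cover of $G$ if $V(G)\setminus S$ is an independent set (contains no edge of $G$). The non-cover complex $\mathcal{NC}(G)$ is the simplicial complex whose simplices are the subsets $S\subseteq V(G)$ that are not covers, i.e. such that $V(G)\setminus S$ contains both endpoints of some edge of $G$. The join $K_1\ast K_2$ of complexes on disjoint vertex sets has simplices $\sigma\sqcup\tau$, $\sigma\in K_1,\tau\in K_2$. $G_1\sqcup G_2$ is the disjoint union of graphs. *)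

From mathcomp Require Import all_boot all_order all_algebra.
From mathcomp Require Import all_classical all_reals all_analysis.
From mathcomp Require Import Rstruct Rstruct_topology.
Import numFieldNormedType.Exports.
Import Order.TTheory GRing.Theory Num.Theory.

Set Implicit Arguments.
Unset Strict Implicit.
Unset Printing Implicit Defensive.

Local Open Scope classical_set_scope.
Local Open Scope ring_scope.

Definition simple_graph (V : finType) (e : rel V) : Prop :=
  symmetric e /\ irreflexive e.

Definition graph_connected (V : finType) (e : rel V) : Prop :=
  forall x y : V, connect e x y.

Definition has_edge (V : finType) (e : rel V) : Prop :=
  exists x y : V, e x y.

Definition disjoint_union (V1 V2 : finType) (e1 : rel V1) (e2 : rel V2)
  : rel (V1 + V2)%type :=
  fun a b => match a, b with
             | inl x, inl y => e1 x y
             | inr x, inr y => e2 x y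
             | _, _ => false
             end.

Definition complex (V : finType) := pred {set V}.

Definition is_cover (V : finType) (e : rel V) (S : {set V}) : bool :=
  [forall x, forall y, ((x \notin S) && (y \notin S)) ==> ~~ e x y].

Definition non_cover_complex (V : finType) (e : rel V) : complex V :=
  fun S => ~~ is_cover e S.

Definition cjoin (V1 V2 : finType) (K1 : complex V1) (K2 : complex V2)
  : complex (V1 + V2)%type :=
  fun S => K1 [set x | inl x \in S]%SET && K2 [set y | inr y \in S]%SET.

(* The 0-sphere S^0 as a complex on two vertices: simplices are the empty set
   and the two singletons. *)
Definition sphere0 : complex bool := fun S => (#|S| <= 1)%N.

Definition csusp (V : finType) (K : complex V) : complex (V + bool)%type :=
  cjoin K sphere0.

(** * Geometric realization, as a subspace of R^V (product = Euclidean topology) *)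
Definition RV (V : finType) := {ptws V -> Rdefinitions.R}.

Definition realization (V : finType) (K : complex V) : set (RV V) :=
  [set x : RV V | (forall v, 0 <= x v) /\ (\sum_(v : V) x v = 1)
                  /\ K [set v | x v != 0]%SET].

Definition cmap (T U : topologicalType) (A : set T) (B : set U) (f : T -> U) : Prop :=
  {within A, continuous f} /\ f @` A `<=` B.

Definition homotopic (T U : topologicalType) (A : set T) (B : set U)
  (f g : T -> U) : Prop :=
  exists H : (Rdefinitions.R * T)%type -> U,
    cmap ((`[0%R, 1%R]%classic : set Rdefinitions.R) `*` A) B H /\
    (forall x, A x -> H (0, x) = f x /\ H (1, x) = g x).

Definition homotopy_equivalent (T U : topologicalType) (A : set T) (B : set U)
  : Prop :=
  exists (f : T -> U) (g : U -> T),
    cmap A B f /\ cmap B A g /\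
    homotopic A A (g \o f) id /\ homotopic B B (f \o g) id.

From mathcomp Require Import all_boot all_order all_algebra.
From mathcomp Require Import all_classical all_reals all_analysis.
From mathcomp Require Import Rstruct Rstruct_topology.
Import numFieldNormedType.Exports.
Import Order.TTheory GRing.Theory Num.Theory.

Set Implicit Arguments.
Unset Strict Implicit.
Unset Printing Implicit Defensive.

Local Open Scope classical_set_scope.
Local Open Scope ring_scope.

(* For a graph G with an edge, the edge depth of a point x of the
   simplex on V(G) is  d(x) = min over edges uv of max(x_u, x_v);  for x >= 0
   it vanishes exactly when the support of x is a non-cover of G.  A point of
   the realization of NC(G1 + G2) is a point x = (x1, x2) of the simplex on
   V1 + V2 with d1(x1) = 0 or d2(x2) = 0.

   The map [collapse] lowers each block xi by its depth di (truncating at 0)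
   and puts the removed mass on the i-th suspension vertex; the lowered block
   has a zero edge, and one suspension coordinate vanishes, so we land in the
   realization of Sigma(NC(G1) * NC(G2)).  The map [spread] redistributes each
   suspension coordinate uniformly over its block.  Then collapse o spread is
   the identity on the target, while spread o collapse does not change the
   block of vanishing depth, so the straight-line homotopy from it to the
   identity stays in the source. *)

Notation RR := Rdefinitions.R.

Section RealContinuity.
Variable T : topologicalType.
Implicit Types f g : T -> RR.

Lemma continuous_add f g :
  continuous f -> continuous g -> continuous (fun x => f x + g x).
Proof. by move=> cf cg x; exact: (@cvgD _ RR^o _ _ _ f g _ _ (cf x) (cg x)). Qed.

Lemma continuous_mul f g :
  continuous f -> continuous g -> continuous (fun x => f x * g x).
Proof. by move=> cf cg x; exact: (@cvgM RR^o _ _ _ f g _ _ (cf x) (cg x)). Qed.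

Lemma continuous_opp f : continuous f -> continuous (fun x => - f x).
Proof. by move=> cf x; exact: (@cvgN _ RR^o _ _ _ f _ (cf x)). Qed.

Lemma continuous_maxr f g :
  continuous f -> continuous g -> continuous (fun x => Order.max (f x) (g x)).
Proof. by move=> cf cg x; exact: (@continuous_max RR T f g x (cf x) (cg x)). Qed.

Lemma continuous_minr f g :
  continuous f -> continuous g -> continuous (fun x => Order.min (f x) (g x)).
Proof. by move=> cf cg x; exact: (@continuous_min RR T f g x (cf x) (cg x)). Qed.

Lemma continuous_bigsum (I : Type) (r : seq I) (F : I -> T -> RR) :
  (forall i, continuous (F i)) -> continuous (fun x => \sum_(i <- r) F i x).
Proof.
move=> cF; elim: r => [|i r IH].
  under eq_fun do rewrite big_nil; exact: cst_continuous.
under eq_fun do rewrite big_cons; exact: continuous_add.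
Qed.

Lemma continuous_bigmin (I : Type) (r : seq I) (P : pred I) (F : I -> T -> RR)
    (f0 : T -> RR) :
  continuous f0 -> (forall i, continuous (F i)) ->
  continuous (fun x => \big[Order.min/f0 x]_(i <- r | P i) F i x).
Proof.
move=> cf0 cF; elim: r => [|i r IH]; first by under eq_fun do rewrite big_nil.
under eq_fun do rewrite big_cons.
by case: (P i) => //; exact: continuous_minr.
Qed.

End RealContinuity.

Lemma continuous_ptws (T : topologicalType) (W : finType) (h : T -> RV W) :
  (forall w, continuous (fun x => h x w)) -> continuous h.
Proof.
by move=> ch x; apply/(@pointwise_cvgP (discrete_topology W) RR) => w; exact: ch.
Qed.

Lemma continuous_fst (T U : topologicalType) : continuous (@fst T U).
Proof. by move=> [t u]; exact: cvg_fst. Qed.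

Lemma continuous_snd (T U : topologicalType) : continuous (@snd T U).
Proof. by move=> [t u]; exact: cvg_snd. Qed.

Lemma continuous_coord (W : finType) (w : W) : continuous (fun x : RV W => x w).
Proof. exact: (@proj_continuous _ (fun _ => RR) w). Qed.

(* The edge depth of a point of R^V with respect to a graph e having the edge
   u0 v0 (used as the seed of the minimum). *)
Section EdgeDepth.
Variables (V : finType) (e : rel V) (u0 v0 : V).
Hypothesis e_u0v0 : e u0 v0.

Definition edge_height (x : V -> RR) (p : V * V) : RR := Order.max (x p.1) (x p.2).

Definition edge_depth (x : V -> RR) : RR :=
  \big[Order.min/edge_height x (u0, v0)]_(p | e p.1 p.2) edge_height x p.

Lemma edge_depth_le x u v : e u v -> edge_depth x <= edge_height x (u, v).
Proof. by move=> euv; rewrite /edge_depth (bigD1 (u, v)) //= ge_min lexx. Qed.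

Lemma edge_depth_ge x c :
  (forall p, e p.1 p.2 -> c <= edge_height x p) -> c <= edge_depth x.
Proof.
move=> lb; rewrite /edge_depth; elim/big_ind: _ => //; first exact: lb.
by move=> a b ca cb; rewrite le_min ca cb.
Qed.

Lemma edge_depth_attained x :
  exists u v, e u v /\ edge_depth x = edge_height x (u, v).
Proof.
rewrite /edge_depth; elim/big_ind: _ => [|a b [u [v [euv ->]]] [u' [v' [euv' ->]]]|].
- by exists u0, v0.
- case: (leP (edge_height x (u, v)) (edge_height x (u', v'))) => h.
  + by exists u, v; split => //; rewrite min_l.
  + by exists u', v'; split => //; rewrite min_r // ltW.
- by move=> [u v] euv; exists u, v.
Qed.

Lemma edge_depth_below x :
  exists u v, [/\ e u v, x u <= edge_depth x & x v <= edge_depth x].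
Proof.
have [u [v [euv ->]]] := edge_depth_attained x.
by exists u, v; split; rewrite // le_max lexx ?orbT.
Qed.

Lemma edge_depth_lowered x : exists u v,
  [/\ e u v, Order.max (x u - edge_depth x) 0 = 0 & Order.max (x v - edge_depth x) 0 = 0].
Proof.
have [u [v [euv xu xv]]] := edge_depth_below x.
by exists u, v; rewrite !max_r // subr_le0.
Qed.

Lemma edge_depth_ge0 x : (forall v, 0 <= x v) -> 0 <= edge_depth x.
Proof. by move=> x0; apply: edge_depth_ge => p _; rewrite le_max x0. Qed.

Lemma edge_depth_eq0P x : (forall v, 0 <= x v) ->
  edge_depth x = 0 <-> exists u v, [/\ e u v, x u = 0 & x v = 0].
Proof.
move=> x0; split.
- have [u [v [euv xu xv]]] := edge_depth_below x => d0.
  by exists u, v; rewrite d0 in xu xv; split => //; apply/eqP; rewrite eq_le x0 andbT.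
- move=> [u [v [euv xu xv]]]; apply/eqP; rewrite eq_le edge_depth_ge0 // andbT.
  by have := edge_depth_le x euv; rewrite /edge_height /= xu xv maxxx.
Qed.

Lemma edge_depth_shift x c : (forall v, 0 <= x v) -> edge_depth x = 0 -> 0 <= c ->
  edge_depth (fun v => x v + c) = c.
Proof.
move=> x0 /(edge_depth_eq0P x0) [u [v [euv xu xv]]] c0; apply/eqP.
rewrite eq_le; apply/andP; split.
- by have := edge_depth_le (fun v => x v + c) euv; rewrite /edge_height /= xu xv add0r maxxx.
- by apply: edge_depth_ge => p _; rewrite le_max lerDr x0.
Qed.

Lemma edge_depth_continuous : continuous (fun x : RV V => edge_depth x).
Proof.
have height_cont p : continuous (fun x : RV V => edge_height x p).
  by apply: continuous_maxr; exact: continuous_coord.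
exact: continuous_bigmin.
Qed.

End EdgeDepth.

Lemma support_preim (W W' : finType) (f : W' -> W) (y : W -> RR) :
  [set w' | f w' \in [set w | y w != 0]]%SET = [set w' | y (f w') != 0]%SET.
Proof. by apply/setP => w'; rewrite !inE. Qed.

Lemma non_cover_supportP (V : finType) (e : rel V) (x : V -> RR) :
  non_cover_complex e [set v | x v != 0]%SET <->
  exists u v, [/\ e u v, x u = 0 & x v = 0].
Proof.
rewrite /non_cover_complex /is_cover; split.
- move/forallPn => [u] /forallPn [v]; rewrite negb_imply negbK !inE !negbK.
  by move=> /andP[/andP[/eqP xu /eqP xv] euv]; exists u, v.
- move=> [u [v [euv xu xv]]]; apply/forallPn; exists u; apply/forallPn; exists v.
  by rewrite negb_imply negbK !inE xu xv eqxx.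
Qed.

Lemma sphere0_supportP (y : bool -> RR) :
  sphere0 [set b | y b != 0]%SET <-> y true = 0 \/ y false = 0.
Proof.
rewrite /sphere0; split.
- move/card_le1_eqP => h; case: (eqVneq (y true) 0) => [|yt]; first by left.
  case: (eqVneq (y false) 0) => [|yf]; first by right.
  by have := h true false; rewrite !inE yt yf => /(_ isT isT).
- move=> h; apply/card_le1_eqP => a b; rewrite !inE.
  by case: a; case: b => //; case: h => ->; rewrite eqxx.
Qed.

Lemma max_sub_add_min (a d : RR) : Order.max (a - d) 0 + Order.min a d = a.
Proof.
case: (leP a d) => h; first by rewrite max_r ?subr_le0 // add0r.
by rewrite max_l ?subr_ge0 ?ltW // subrK.
Qed.

Lemma sum_const_div (W : finType) (c : RR) : (0 < #|W|)%N ->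
  \sum_(w : W) c / #|W|%:R = c.
Proof.
move=> W0; rewrite sumr_const.
change (c / #|W|%:R *+ #|W| = c); rewrite -mulr_natr divfK //.
by rewrite pnatr_eq0 -lt0n.
Qed.

Section Suspension.
Variables (V1 V2 : finType) (e1 : rel V1) (e2 : rel V2).
Variables (a1 b1 : V1) (a2 b2 : V2).
Hypotheses (e1_ab : e1 a1 b1) (e2_ab : e2 a2 b2).

Let Src := realization (non_cover_complex (disjoint_union e1 e2)).
Let Tgt := realization (csusp (cjoin (non_cover_complex e1) (non_cover_complex e2))).

Definition depth1 (x : RV (V1 + V2)%type) : RR := edge_depth e1 a1 b1 (fun v => x (inl v)).
Definition depth2 (x : RV (V1 + V2)%type) : RR := edge_depth e2 a2 b2 (fun v => x (inr v)).

Definition collapse (x : RV (V1 + V2)%type) : RV ((V1 + V2) + bool)%type :=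
  fun w => match w with
  | inl (inl v) => Order.max (x (inl v) - depth1 x) 0
  | inl (inr v) => Order.max (x (inr v) - depth2 x) 0
  | inr true => \sum_v Order.min (x (inl v)) (depth1 x)
  | inr false => \sum_v Order.min (x (inr v)) (depth2 x)
  end.

Definition spread (y : RV ((V1 + V2) + bool)%type) : RV (V1 + V2)%type :=
  fun w => match w with
  | inl v => y (inl (inl v)) + y (inr true) / #|V1|%:R
  | inr v => y (inl (inr v)) + y (inr false) / #|V2|%:R
  end.

Lemma card_V1_gt0 : (0 < #|V1|)%N. Proof. by apply/card_gt0P; exists a1. Qed.
Lemma card_V2_gt0 : (0 < #|V2|)%N. Proof. by apply/card_gt0P; exists a2. Qed.

Lemma sum_src (x : RV (V1 + V2)%type) :
  \sum_w x w = \sum_v x (inl v) + \sum_v x (inr v).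
Proof. by rewrite big_sumType. Qed.

Lemma sum_tgt (y : RV ((V1 + V2) + bool)%type) : \sum_w y w =
  \sum_v y (inl (inl v)) + \sum_v y (inl (inr v)) + (y (inr true) + y (inr false)).
Proof. by rewrite big_sumType big_sumType big_bool. Qed.

Lemma SrcP x : Src x <->
  [/\ (forall w, 0 <= x w), \sum_w x w = 1 & depth1 x = 0 \/ depth2 x = 0].
Proof.
rewrite /Src /realization /= non_cover_supportP; split.
- move=> [x0 [s1 [[u|u] [[v|v] [//= euv xu xv]]]]]; split => //.
  + by left; apply/(edge_depth_eq0P e1_ab (fun w => x0 (inl w))); exists u, v.
  + by right; apply/(edge_depth_eq0P e2_ab (fun w => x0 (inr w))); exists u, v.
- move=> [x0 s1 d0]; do 2!split => //.
  case: d0 => [/(edge_depth_eq0P e1_ab (fun w => x0 (inl w)))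
              | /(edge_depth_eq0P e2_ab (fun w => x0 (inr w)))] [u [v [euv xu xv]]].
  + by exists (inl u), (inl v).
  + by exists (inr u), (inr v).
Qed.

Lemma TgtP y : Tgt y <-> [/\ (forall w, 0 <= y w), \sum_w y w = 1,
   (exists u v, [/\ e1 u v, y (inl (inl u)) = 0 & y (inl (inl v)) = 0]),
   (exists u v, [/\ e2 u v, y (inl (inr u)) = 0 & y (inl (inr v)) = 0]) &
   y (inr true) = 0 \/ y (inr false) = 0].
Proof.
rewrite /Tgt /realization /csusp /cjoin /= !support_preim.
split.
- move=> [y0 [s1 /andP[/andP[/non_cover_supportP nc1 /non_cover_supportP nc2]]]].
  by move=> /sphere0_supportP s0.
- move=> [y0 s1 /non_cover_supportP -> /non_cover_supportP -> s0].
  by do 2!split => //; apply/(sphere0_supportP (fun b => y (inr b))).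
Qed.

Lemma collapse_Tgt x : Src x -> Tgt (collapse x).
Proof.
move/SrcP => [x0 s1 d0].
have d1_ge0 : 0 <= depth1 x by apply: edge_depth_ge0.
have d2_ge0 : 0 <= depth2 x by apply: edge_depth_ge0.
apply/TgtP; split.
- by case=> [[v|v]|[|]] /=; rewrite ?le_max ?lexx ?orbT //;
     apply: sumr_ge0 => v _; rewrite le_min x0.
- rewrite sum_tgt /= addrACA -!big_split /= -s1 sum_src.
  by congr (_ + _); apply: eq_bigr => v _; exact: max_sub_add_min.
- exact: (edge_depth_lowered e1_ab (fun v => x (inl v))).
- exact: (edge_depth_lowered e2_ab (fun v => x (inr v))).
- by case: d0 => h; [left|right]; rewrite /= h; apply: big1 => v _; exact: min_r.
Qed.

Lemma spread_Src y : Tgt y -> Src (spread y).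
Proof.
move/TgtP => [y0 s1 [u [v [euv yu yv]]] [u' [v' [euv' yu' yv']]] ys].
have c1_ge0 : 0 <= y (inr true) / #|V1|%:R by rewrite divr_ge0.
have c2_ge0 : 0 <= y (inr false) / #|V2|%:R by rewrite divr_ge0.
apply/SrcP; split.
- by case=> w /=; apply: addr_ge0.
- rewrite sum_src /= !big_split /= !sum_const_div ?card_V1_gt0 ?card_V2_gt0 //.
  by rewrite -s1 sum_tgt addrACA.
- case: ys => h; [left|right].
  + apply/(edge_depth_eq0P e1_ab) => [w|]; first exact: addr_ge0.
    by exists u, v; rewrite /= h mul0r yu yv !addr0.
  + apply/(edge_depth_eq0P e2_ab) => [w|]; first exact: addr_ge0.
    by exists u', v'; rewrite /= h mul0r yu' yv' !addr0.
Qed.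

(* collapse o spread is the identity on the target: spreading raises each
   block, which had depth 0, exactly by its suspension coordinate. *)
Lemma collapseK y : Tgt y -> collapse (spread y) = y.
Proof.
move/TgtP => [y0 s1 [u [v [euv yu yv]]] [u' [v' [euv' yu' yv']]] _].
set c1 := y (inr true) / #|V1|%:R; set c2 := y (inr false) / #|V2|%:R.
have c1_ge0 : 0 <= c1 by rewrite divr_ge0.
have c2_ge0 : 0 <= c2 by rewrite divr_ge0.
have D1 : depth1 (spread y) = c1.
  apply: (edge_depth_shift e1_ab (x := fun v => y (inl (inl v)))) => //.
  by apply/edge_depth_eq0P => //; exists u, v.
have D2 : depth2 (spread y) = c2.
  apply: (edge_depth_shift e2_ab (x := fun v => y (inl (inr v)))) => //.
  by apply/edge_depth_eq0P => //; exists u', v'.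
apply/funext => -[[w|w]|[|]]; rewrite /collapse ?D1 ?D2 /spread.
- by rewrite addrK max_l.
- by rewrite addrK max_l.
- by rewrite (eq_bigr (fun _ => c1)) ?sum_const_div ?card_V1_gt0 // => i _;
     rewrite min_r // lerDr.
- by rewrite (eq_bigr (fun _ => c2)) ?sum_const_div ?card_V2_gt0 // => i _;
     rewrite min_r // lerDr.
Qed.

Lemma spread_collapse_inl x : (forall w, 0 <= x w) -> depth1 x = 0 ->
  forall v, spread (collapse x) (inl v) = x (inl v).
Proof.
move=> x0 d0 v /=; rewrite d0 subr0 max_l // big1 ?mul0r ?addr0 // => w _.
by rewrite min_r.
Qed.

Lemma spread_collapse_inr x : (forall w, 0 <= x w) -> depth2 x = 0 ->
  forall v, spread (collapse x) (inr v) = x (inr v).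
Proof.
move=> x0 d0 v /=; rewrite d0 subr0 max_l // big1 ?mul0r ?addr0 // => w _.
by rewrite min_r.
Qed.

Definition segment (p : RR * RV (V1 + V2)%type) : RV (V1 + V2)%type :=
  fun w => (1 - p.1) * spread (collapse p.2) w + p.1 * p.2 w.

Lemma segment_Src t x : 0 <= t <= 1 -> Src x -> Src (segment (t, x)).
Proof.
move=> /andP [t0 t1] Sx; have /SrcP [gf0 gf1 _] := spread_Src (collapse_Tgt Sx).
have /SrcP [x0 s1 d0] := Sx.
have fixed_block w : spread (collapse x) w = x w -> segment (t, x) w = x w.
  by rewrite /segment /= => ->; rewrite -mulrDl subrK mul1r.
apply/SrcP; split.
- by move=> w; rewrite addr_ge0 // mulr_ge0 // subr_ge0.
- by rewrite big_split /= -!mulr_sumr gf1 s1 !mulr1 subrK.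
- case: d0 => h; [left|right]; rewrite -h; congr edge_depth; apply/funext => v.
  + exact/fixed_block/spread_collapse_inl.
  + exact/fixed_block/spread_collapse_inr.
Qed.

Lemma depth1_continuous : continuous depth1.
Proof.
move=> x; apply: (continuous_comp (f := fun x : RV (V1 + V2)%type => (fun v => x (inl v)) : RV V1)).
  by apply: continuous_ptws => v; exact: continuous_coord.
exact: edge_depth_continuous.
Qed.

Lemma depth2_continuous : continuous depth2.
Proof.
move=> x; apply: (continuous_comp (f := fun x : RV (V1 + V2)%type => (fun v => x (inr v)) : RV V2)).
  by apply: continuous_ptws => v; exact: continuous_coord.
exact: edge_depth_continuous.
Qed.

Lemma collapse_continuous : continuous collapse.
Proof.
apply: continuous_ptws => -[[v|v]|[|]]; rewrite /collapse.
- by apply: continuous_maxr; [apply: continuous_add; [exact: continuous_coord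
    | exact/continuous_opp/depth1_continuous] | exact: cst_continuous].
- by apply: continuous_maxr; [apply: continuous_add; [exact: continuous_coord
    | exact/continuous_opp/depth2_continuous] | exact: cst_continuous].
- by apply: continuous_bigsum => v; apply: continuous_minr;
    [exact: continuous_coord | exact: depth1_continuous].
- by apply: continuous_bigsum => v; apply: continuous_minr;
    [exact: continuous_coord | exact: depth2_continuous].
Qed.

Lemma spread_continuous : continuous spread.
Proof.
apply: continuous_ptws => -[v|v]; rewrite /spread;
  by apply: continuous_add; [|apply: continuous_mul; [|exact: cst_continuous]];
     exact: continuous_coord.
Qed.

Lemma segment_continuous : continuous segment.
Proof.
apply: continuous_ptws => w; rewrite /segment.
apply: continuous_add; apply: continuous_mul; try exact: continuous_fst.
- by apply: continuous_add; [exact: cst_continuous | exact/continuous_opp/continuous_fst].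
- move=> p; apply: (@continuous_comp _ _ _ snd (fun x => spread (collapse x) w)).
    exact: continuous_snd.
  apply: (@continuous_comp _ _ _ collapse (fun y => spread y w)).
    exact: collapse_continuous.
  apply: (@continuous_comp _ _ _ spread (fun x : RV _ => x w)).
    exact: spread_continuous.
  exact: continuous_coord.
- move=> p; apply: (@continuous_comp _ _ _ snd (fun x : RV _ => x w)).
    exact: continuous_snd.
  exact: continuous_coord.
Qed.

Lemma suspension_homotopy_equivalence : homotopy_equivalent Src Tgt.
Proof.
exists collapse, spread; split; [|split; [|split]].
- split; first exact: continuous_subspaceT collapse_continuous.
  by move=> _ [x Sx <-]; exact: collapse_Tgt.
- split; first exact: continuous_subspaceT spread_continuous.
  by move=> _ [y Ty <-]; exact: spread_Src.
- exists segment; split.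
  + split; first exact: continuous_subspaceT segment_continuous.
    by move=> _ [[t x] [/= t01 Sx] <-]; apply: segment_Src; rewrite // -in_itv.
  + by move=> x Sx; split; apply/funext => w;
      rewrite /segment /= ?subr0 ?subrr ?mul1r ?mul0r ?addr0 ?add0r.
- exists snd; split.
  + split; first exact: continuous_subspaceT (@continuous_snd _ _).
    by move=> _ [[t y] [_ Ty] <-].
  + by move=> y Ty; rewrite /= collapseK.
Qed.

End Suspension.

Theorem lemma4p1 (V1 V2 : finType) (e1 : rel V1) (e2 : rel V2) :
  simple_graph e1 -> simple_graph e2 ->
  graph_connected e1 -> graph_connected e2 ->
  has_edge e1 -> has_edge e2 ->
  homotopy_equivalent
    (realization (non_cover_complex (disjoint_union e1 e2)))
    (realization (csusp (cjoin (non_cover_complex e1) (non_cover_complex e2)))).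
Proof.
move=> _ _ _ _ [a1 [b1 e1_ab]] [a2 [b2 e2_ab]].
exact: suspension_homotopy_equivalence e1_ab e2_ab.
Qed.
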